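(* Let $X_t \subset X_{t+p}$ be finite simplicial complexes with oriented simplices, the simplices of $X_t$ carrying the same orientations as in $X_{t+p}$. Let $\mathscr{S}_{t+p}$ be a cellular sheaf on $X_{t+p}$ whose stalks are finite-dimensional inner product spaces over $\mathbb{R}$ or $\mathbb{C}$, and let $\mathscr{S}_t$ be its pullback to $X_t$. The projection cochain map $\pi: C^\bullet(X_{t+p};\mathscr{S}_{t+p})\to C^\bullet(X_t;\mathscr{S}_t)$ induces a map $\pi^\bullet: H^q(X_{t+p};\mathscr{S}_{t+p})\to H^q(X_t;\mathscr{S}_t)$ on sheaf cohomology, and the persistent sheaf Laplacian satisfies $$\operatorname{nullity}(\Delta_q^{t,p}) = \dim \operatorname{im}\, \pi^\bullet\big(H^q(X_{t+p};\mathscr{S}_{t+p})\big).$$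
   Context: A cellular sheaf $\mathscr{S}$ on a simplicial complex $X$ assigns to each simplex $\sigma$ a finite-dimensional vector space $\mathscr{S}(\sigma)$ and to each face relation $\sigma\leqslant\tau$ a linear map $\mathscr{S}_{\sigma\leqslant\tau}$, functorially (identity on $\sigma\leqslant\sigma$, compatible with composition). The pullback $\mathscr{S}_t$ has the same stalks and restriction maps as $\mathscr{S}_{t+p}$ on simplices and face relations of $X_t$. $C^q(X;\mathscr{S})=\bigoplus_{\dim\sigma=q}\mathscr{S}(\sigma)$, with inner product making distinct stalks orthogonal; thus $C^q(X_t;\mathscr{S}_t)$ is identified with the subspace of $C^q(X_{t+p};\mathscr{S}_{t+p})$ spanned by stalks over simplices of $X_t$, and $\pi$ is the orthogonal projection onto it. Signed incidence: for $\tau=[v_0,\dots,v_n]$ and $\sigma=[v_0,\dots,\hat v_i,\dots,v_n]$, $[\sigma:\tau]=(-1)^i$ (or $(-1)^{i+1}$ if $\sigma$ is oppositely oriented), and $0$ unless $\sigma$ is a codimension-one face. Coboundary: $d_q|_{\mathscr{S}(\sigma)}=\sum_{\sigma\leqslant\tau}[\sigma:\tau]\mathscr{S}_{\sigma\leqslant\tau}$; $H^q=\ker d_q/\operatorname{im} d_{q-1}$. Write $d^t, d^{t+p}$ for the coboundaries of the two complexes. Persistent sheaf Laplacian: let $\mathbb{C}^{t,p}_{q+1}=\{e\in C^{q+1}(X_{t+p};\mathscr{S}_{t+p}) : (d_q^{t+p})^*(e)\in C^q(X_t;\mathscr{S}_t)\}$, let $\eth_q^{t,p}: C^q(X_t;\mathscr{S}_t)\to\mathbb{C}^{t,p}_{q+1}$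 be the adjoint of $(d_q^{t+p})^*|_{\mathbb{C}^{t,p}_{q+1}}:\mathbb{C}^{t,p}_{q+1}\to C^q(X_t;\mathscr{S}_t)$, and set $\Delta_q^{t,p}=(\eth_q^{t,p})^*\eth_q^{t,p}+d_{q-1}^t(d_{q-1}^t)^*$, an operator on $C^q(X_t;\mathscr{S}_t)$. *)

From HB Require Import structures.
From mathcomp Require Import all_boot all_order all_algebra.
Set Implicit Arguments. Unset Strict Implicit. Unset Printing Implicit Defensive.
Import Order.TTheory GRing.Theory Num.Theory.
Local Open Scope ring_scope.

(* A simplex is a nonempty set of vertices; its dimension is #|s| - 1.      *)
(* X_{t+p} expresses that X_t carries the orientations of X_{t+p}.           *)
Section Complexes.
Variable V : finType.

Definition is_complex (X : {set {set V}}) : Prop :=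
  set0 \notin X /\
  (forall s t : {set V}, t \in X -> s \subset t -> s != set0 -> s \in X).

Definition is_orientation (X : {set {set V}}) (o : {set V} -> seq V) : Prop :=
  forall s, s \in X -> perm_eq (o s) (enum s).

(* number of inversions of a sequence w.r.t. the fixed enumeration of V;    *)
(* its parity is the parity of the permutation sorting the sequence.        *)
Fixpoint inversions (s : seq V) : nat :=
  if s is x :: s' then
    (count (fun y => enum_rank y < enum_rank x)%N s' + inversions s')%N
  else 0%N.

End Complexes.

Section Sheaves.
Variables (V : finType) (K : fieldType).

Definition sgn_seq (s : seq V) : K := (-1) ^+ inversions s.

(* Signed incidence [s : t]: for t = [v_0,..,v_n] (= o t) and s the face    *)
(* obtained by deleting v_i, it is (-1)^i if o s is an even permutation of  *)
(* [v_0,..,^v_i,..,v_n] and (-1)^(i+1) otherwise; 0 if s is not a          *)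
(* codimension-one face of t.                                                *)
Definition incidence (o : {set V} -> seq V) (s t : {set V}) : K :=
  if (s \subset t) && (#|t| == #|s|.+1)%N then
    if [pick w in t :\: s] is Some w then
      (-1) ^+ (index w (o t)) * sgn_seq (rem w (o t)) * sgn_seq (o s)
    else 0
  else 0.

(* A cellular sheaf: stalk S(s) = K^(stalk_dim s) (with its standard inner   *)
(* product, i.e. stalks written in orthonormal bases) and restriction maps   *)
(* S_{s <= t} : S(s) -> S(t), acting on row vectors  v |-> v *m restr s t.   *)
Record sheaf := Sheaf {
  stalk_dim : {set V} -> nat;
  restr : forall s t : {set V}, 'M[K]_(stalk_dim s, stalk_dim t) }.

Definition is_cellular_sheaf (X : {set {set V}}) (S : sheaf) : Prop :=
  (forall s, s \in X -> restr S s s = 1%:M) /\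
  (forall s t u, s \in X -> t \in X -> u \in X -> s \subset t -> t \subset u ->
     restr S s u = restr S s t *m restr S t u).

Section OneSheaf.
Variable S : sheaf.

(* Ambient coordinate space: one coordinate for each pair (s, k), s any     *)
(* simplex (subset of V), k < stalk_dim s.  C^q(X;S) is the coordinate       *)
(* subspace of pairs with s in X and dim s = q; distinct stalks are          *)
(* orthogonal.                                                               *)
Definition idx := {s : {set V} & 'I_(stalk_dim S s)}.
Definition amb := #|{: idx}|.
Definition simp (i : 'I_amb) : {set V} := tag (enum_val i).

(* orthogonal projector onto C^q(X;S) (diagonal 0/1 matrix); its row space   *)
(* is C^q(X;S) *)
Definition cochain_proj (X : {set {set V}}) (q : nat) : 'M[K]_amb :=
  \matrix_(i, j) ((i == j) && (simp i \in X) && (#|simp i| == q.+1)%N)%:R.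

(* total coboundary of the complex X (row-vector convention) *)
Definition coboundary (o : {set V} -> seq V) (X : {set {set V}}) : 'M[K]_amb :=
  \matrix_(i, j)
    let a := enum_val i in let b := enum_val j in
    if (tag a \in X) && (tag b \in X) then
      incidence o (tag a) (tag b) * restr S (tag a) (tag b) (tagged a) (tagged b)
    else 0.

Definition dq o X q : 'M[K]_amb := cochain_proj X q *m coboundary o X.
(* d_{q-1}, with d_{-1} = 0 *)
Definition dprev o X q : 'M[K]_amb := if q is q'.+1 then dq o X q' else 0.

Definition cocycles o X q : 'M[K]_amb := (cochain_proj X q :&: kermx (dq o X q))%MS.
Definition coboundaries o X q : 'M[K]_amb := dprev o X q.

(* pi^bullet : H^q(Y) -> H^q(X), [z] |-> [pi z] (pi = cochain_proj X q on    *)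
(* q-cochains) is well defined: pi maps cocycles to cocycles and             *)
(* coboundaries to coboundaries.                                            *)
Definition induces_cohomology_map o (X Y : {set {set V}}) q : Prop :=
  (cocycles o Y q *m cochain_proj X q <= cocycles o X q)%MS /\
  (coboundaries o Y q *m cochain_proj X q <= coboundaries o X q)%MS.

(* dim im pi^bullet : the image is (pi(Z^q(Y)) + B^q(X)) / B^q(X) in        *)
(* H^q(X) = Z^q(X) / B^q(X).                                                *)
Definition dim_im_induced o (X Y : {set {set V}}) q : nat :=
  (\rank (cocycles o Y q *m cochain_proj X q + coboundaries o X q)%MS
   - \rank (coboundaries o X q))%N.

Section InnerProduct.
Variable cj : K -> K.  (* conjugation: identity over R, complex conj over C *)

Definition adjmx m n (M : 'M[K]_(m, n)) : 'M[K]_(n, m) := (map_mx cj M)^T.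
Definition ip (u v : 'rV[K]_amb) : K := (u *m adjmx v) 0 0.

(* membership in C^{t,p}_{q+1} = { e in C^{q+1}(Y) : (d_q^Y)^* e in C^q(X) } *)
Definition in_Ctp o (X Y : {set {set V}}) q (e : 'rV[K]_amb) : bool :=
  (e <= cochain_proj Y q.+1)%MS &&
  (e *m adjmx (dq o Y q) <= cochain_proj X q)%MS.

(* Eth represents eth_q^{t,p} : C^q(X) -> C^{t,p}_{q+1}, the adjoint of       *)
(* (d_q^Y)^* restricted to C^{t,p}_{q+1}.                                   *)
Definition is_eth o X Y q (Eth : 'M[K]_amb) : Prop :=
  (forall u : 'rV_amb, (u <= cochain_proj X q)%MS -> in_Ctp o X Y q (u *m Eth)) /\
  (forall (e u : 'rV_amb), in_Ctp o X Y q e -> (u <= cochain_proj X q)%MS ->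
     ip (e *m adjmx (dq o Y q)) u = ip e (u *m Eth)).

Definition is_eth_adj o X Y q (Eth Eths : 'M[K]_amb) : Prop :=
  (forall e : 'rV_amb, in_Ctp o X Y q e -> (e *m Eths <= cochain_proj X q)%MS) /\
  (forall (e u : 'rV_amb), in_Ctp o X Y q e -> (u <= cochain_proj X q)%MS ->
     ip (e *m Eths) u = ip e (u *m Eth)).

(* Delta_q^{t,p} = eth^* eth + d_{q-1}^X (d_{q-1}^X)^*  (row-vector convention: *)
(* u |-> (u Eth) Eths + (u (d_{q-1})^* ) d_{q-1}).                            *)
Definition persistent_laplacian o X (Eth Eths : 'M[K]_amb) q : 'M[K]_amb :=
  Eth *m Eths + adjmx (dprev o X q) *m dprev o X q.

End InnerProduct.

Definition nullity_on (U L : 'M[K]_amb) : nat := \rank (U :&: kermx L)%MS.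

End OneSheaf.
End Sheaves.

From HB Require Import structures.
From mathcomp Require Import all_boot all_order all_algebra.
From mathcomp Require Import zify ring.
Import Order.TTheory GRing.Theory Num.Theory.
Set Implicit Arguments. Unset Strict Implicit. Unset Printing Implicit Defensive.
Local Open Scope ring_scope.

(* The positivity of the inner product splits the kernel of the persistent
   Laplacian on C^q(X_t) into ker eth and ker (d^t_{q-1})^*.  As eth is adjoint
   to (d^{t+p}_q)^* restricted to C^{t,p}_{q+1}, ker eth is the orthogonal
   complement in C^q(X_t) of (d^{t+p}_q)^*(C^{t,p}_{q+1}), and a rank count
   identifies it with pi(Z^q(X_{t+p})).  The kernel is therefore the orthogonal
   complement of B^q(X_t) inside pi(Z^q(X_{t+p})), whose dimension is
   dim (pi(Z^q(X_{t+p})) + B^q(X_t)) - dim B^q(X_t).  The combinatorial input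
   is that d^t is the restriction of d^{t+p} (X_t is closed under faces) and
   d o d = 0: the two faces between s and a codimension-two coface u enter with
   opposite signs. *)

Section Incidence.
Variables (V : finType) (K : fieldType).

Definition vlt (x y : V) : bool := (enum_rank x < enum_rank y)%N.

Lemma vlt_asym (x y : V) : x != y -> vlt x y = ~~ vlt y x.
Proof.
move=> xy; have : enum_rank x != enum_rank y by rewrite (inj_eq enum_rank_inj).
by rewrite /vlt -val_eqE /=; case: ltngtP.
Qed.

Definition nbelow (w : V) (A : {set V}) : nat := count (vlt^~ w) (enum A).

Lemma nbelow_setU1 w v (A : {set V}) : v \notin A ->
  nbelow w (v |: A) = (vlt v w + nbelow w A)%N.
Proof.
move=> vA; rewrite /nbelow; have /permP -> // : perm_eq (enum (v |: A)) (v :: enum A).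
apply: uniq_perm; rewrite /= ?mem_enum ?vA ?enum_uniq // => x.
by rewrite mem_enum in_cons mem_enum in_setU1.
Qed.

Lemma sgn_seq_cons x (l : seq V) :
  sgn_seq K (x :: l) = (-1) ^+ count (vlt^~ x) l * sgn_seq K l.
Proof. by rewrite /sgn_seq /= exprD. Qed.

Lemma sgn_seq_rem w (l : seq V) : w \in l ->
  (-1) ^+ index w l * sgn_seq K (rem w l) = sgn_seq K l * (-1) ^+ count (vlt^~ w) l.
Proof.
elim: l => //= x l IHl; rewrite in_cons sgn_seq_cons.
have [<- _|xw /= wl] := eqVneq x w.
  by rewrite /vlt ltnn expr0 mul1r mulrAC -expr2 sqrr_sign mul1r.
rewrite sgn_seq_cons (permP (perm_to_rem wl)) /= (vlt_asym xw) !exprD exprS signrN.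
transitivity (((-1) ^+ vlt w x) ^+ 2 * (-1) * (-1) ^+ count (vlt^~ x) (rem w l) *
  (sgn_seq K l * (-1) ^+ count (vlt^~ w) l)); last by ring.
by rewrite sqrr_sign -IHl //; ring.
Qed.

Lemma setU1D (w : V) (s : {set V}) : w \notin s -> (w |: s) :\: s = [set w].
Proof.
move=> ws; apply/setP => x; rewrite !inE.
by have [->|] := eqVneq x w; [rewrite ws | case: (x \in s)].
Qed.

Lemma incidence_setU1 o (s : {set V}) w : w \notin s ->
  perm_eq (o (w |: s)) (enum (w |: s)) ->
  incidence K o s (w |: s) = sgn_seq K (o (w |: s)) * sgn_seq K (o s) * (-1) ^+ nbelow w s.
Proof.
move=> ws ot; rewrite /incidence subsetUr cardsU1 ws eqxx setU1D //.
case: pickP => [w'|/(_ w)]; last by rewrite set11.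
rewrite inE => /eqP ->; rewrite sgn_seq_rem ?(perm_mem ot) ?mem_enum ?setU11 //.
by rewrite (permP ot) -/(nbelow w _) nbelow_setU1 // /vlt ltnn mulrAC.
Qed.

Lemma incidence_face o (s t : {set V}) :
  incidence K o s t != 0 -> (s \subset t) && (#|t| == #|s|.+1)%N.
Proof. by rewrite /incidence; case: ifP; rewrite ?eqxx. Qed.

Lemma codim1_setU1 (s t : {set V}) : s \subset t -> #|t| = #|s|.+1 ->
  exists2 w, w \notin s & t = w |: s.
Proof.
move=> st ct; have : #|t :\: s| == 1%N by rewrite cardsD (setIidPr st) ct subSnn.
case/cards1P => w Ew; have : w \in t :\: s by rewrite Ew set11.
rewrite inE => /andP[ws _]; exists w => //.
by rewrite -{1}(setID t s) (setIidPr st) Ew setUC.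
Qed.

Lemma incidence_codim2_cancel o (s : {set V}) v1 v2 : v1 != v2 -> v1 \notin s -> v2 \notin s ->
  let t1 := v1 |: s in let t2 := v2 |: s in let u := v1 |: t2 in
  perm_eq (o t1) (enum t1) -> perm_eq (o t2) (enum t2) -> perm_eq (o u) (enum u) ->
  incidence K o s t1 * incidence K o t1 u + incidence K o s t2 * incidence K o t2 u = 0.
Proof.
move=> v12 v1s v2s t1 t2 u ot1 ot2 ou.
(* the two terms differ by (-1)^(vlt v1 v2 + vlt v2 v1) = -1 *)
have v1t2 : v1 \notin t2 by rewrite in_setU1 negb_or v12.
have v2t1 : v2 \notin t1 by rewrite in_setU1 negb_or eq_sym v12.
have Eu : u = v2 |: t1 by rewrite /u /t1 /t2 setUCA.
rewrite [in X in X + _]Eu !incidence_setU1 -?Eu // !nbelow_setU1 //.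
rewrite (vlt_asym v12) !exprD signrN -/t1 -/t2 -/u.
transitivity ((sgn_seq K (o t2) ^+ 2 - sgn_seq K (o t1) ^+ 2) *
  (sgn_seq K (o s) * sgn_seq K (o u) * (-1) ^+ vlt v2 v1 *
   (-1) ^+ nbelow v1 s * (-1) ^+ nbelow v2 s)); first by ring.
by rewrite /sgn_seq !sqrr_sign subrr mul0r.
Qed.

Lemma codim2_faces (s t u : {set V}) v1 v2 : u :\: s = [set v1; v2] ->
  s \subset t -> t \subset u -> #|t| = #|s|.+1 -> (t == v1 |: s) || (t == v2 |: s).
Proof.
move=> Eus st tu ct; have [w ws Et] := codim1_setU1 st ct.
have : w \in u :\: s by rewrite inE ws (subsetP tu) // Et setU11.
by rewrite Eus !inE Et => /orP[]/eqP->; rewrite eqxx ?orbT.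
Qed.

Lemma sum_incidence_mul o (Y : {set {set V}}) (s u : {set V}) :
  is_complex Y -> is_orientation Y o -> u \in Y ->
  \sum_(t in Y) incidence K o s t * incidence K o t u = 0.
Proof.
move=> [_ Ydown] Yo uY.
case: (boolP ((s \subset u) && (#|u| == #|s|.+2)%N)) => [/andP[su /eqP cu]|not_codim2];
  last first.
  apply: big1 => t _; apply/eqP; apply: contraR not_codim2; rewrite mulf_eq0 negb_or.
  case/andP=> /incidence_face/andP[st /eqP ct] /incidence_face/andP[tu /eqP ->].
  by rewrite (subset_trans st tu) ct eqxx.
have : #|u :\: s| == 2%N by rewrite cardsD (setIidPr su) cu -addn2 addKn.
case/cards2P => v1 [v2 [v12 Eus]].
have [v1s v2s] : v1 \notin s /\ v2 \notin s.
  by have := subsetDr u s; rewrite Eus subUset !sub1set !inE => /andP[-> ->].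
have Eu : u = v1 |: (v2 |: s) by rewrite -(setID u s) (setIidPr su) Eus setUC -setUA.
have t1Y : v1 |: s \in Y.
  by apply: Ydown uY _ _; rewrite ?Eu ?setUS ?subsetUr // -card_gt0 cardsU1 v1s.
have t2Y : v2 |: s \in Y.
  by apply: Ydown uY _ _; rewrite ?Eu ?subsetUr // -card_gt0 cardsU1 v2s.
have t21 : v2 |: s != v1 |: s.
  by apply: contraNneq v2s => /setP/(_ v2); rewrite !inE eqxx eq_sym (negbTE v12) /= => <-.
rewrite (bigD1 _ t1Y) (bigD1 (v2 |: s)) /=; last exact/andP.
rewrite big1 ?addr0 => [|t /andP[/andP[tY nt1] nt2]]; last first.
  apply/eqP; apply: contraR nt1; rewrite mulf_eq0 negb_or.
  case/andP=> /incidence_face/andP[st /eqP ct] /incidence_face/andP[tu _].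
  by case/orP: (codim2_faces Eus st tu ct) => // /eqP Et; rewrite Et eqxx in nt2.
by rewrite Eu in uY *; apply: incidence_codim2_cancel; rewrite ?Yo.
Qed.

End Incidence.

Section Cochains.
Variables (V : finType) (K : fieldType) (S : sheaf V K).
Local Notation n := (amb S).
Local Notation D := (coboundary S).
Local Notation cp := (cochain_proj S).

Definition in_cochains (X : {set {set V}}) q (a : idx S) : bool :=
  (tag a \in X) && (#|tag a| == q.+1)%N.

Lemma cochain_projE X q : cp X q = diag_mx (\row_i (in_cochains X q (enum_val i))%:R).
Proof.
apply/matrixP => i j; rewrite !mxE /in_cochains.
by case: eqP => [->|]; rewrite ?eqxx ?mulr1n ?mulr0n //= andbA.
Qed.

Lemma cochain_proj_idem X q : cp X q *m cp X q = cp X q.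
Proof.
rewrite cochain_projE mulmx_diag; congr diag_mx; apply/rowP => i.
by rewrite !mxE -natrM mulnb andbb.
Qed.

Lemma cochain_proj_adj (cj : {rmorphism K -> K}) X q : adjmx cj (cp X q) = cp X q.
Proof.
rewrite /adjmx cochain_projE map_diag_mx tr_diag_mx; congr diag_mx.
by apply/rowP => i; rewrite !mxE rmorph_nat.
Qed.

Lemma cochain_proj_sub (X Y : {set {set V}}) q : X \subset Y -> cp X q *m cp Y q = cp X q.
Proof.
move=> XY; rewrite !cochain_projE mulmx_diag; congr diag_mx; apply/rowP => i.
rewrite !mxE -natrM /in_cochains; case: (boolP (tag (enum_val i) \in X)) => //= iX.
by rewrite (subsetP XY _ iX) mulnb andbb.
Qed.

Lemma cochain_proj_mulmxE m X q (A : 'M[K]_(n, m)) i j :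
  (cp X q *m A) i j = (in_cochains X q (enum_val i))%:R * A i j.
Proof. by rewrite cochain_projE mul_diag_mx mxE [in LHS]mxE. Qed.

Lemma mulmx_cochain_projE m X q (A : 'M[K]_(m, n)) i j :
  (A *m cp X q) i j = A i j * (in_cochains X q (enum_val j))%:R.
Proof. by rewrite cochain_projE mul_mx_diag mxE [in LHS]mxE. Qed.

Definition coboundary_entry o (X : {set {set V}}) (a b : idx S) : K :=
  if (tag a \in X) && (tag b \in X) then
    incidence K o (tag a) (tag b) * restr S (tag a) (tag b) (tagged a) (tagged b)
  else 0.

Lemma coboundaryE o X i j : D o X i j = coboundary_entry o X (enum_val i) (enum_val j).
Proof. by rewrite mxE. Qed.

Lemma dq_restrict o (X Y : {set {set V}}) q : is_complex X -> X \subset Y ->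
  dq S o X q = dq S o Y q *m cp X q.+1.
Proof.
move=> [_ Xdown] XY; apply/matrixP => i j.
rewrite mulmx_cochain_projE !cochain_proj_mulmxE !coboundaryE.
rewrite /in_cochains /coboundary_entry; case: (enum_val i) (enum_val j) => [s k] [t l] /=.
have [tX|_] := boolP (t \in X); last by rewrite andbF !mulr0.
rewrite (subsetP XY _ tX) !andbT.
have [cs|_] := eqVneq #|s| q.+1; last by rewrite !andbF !mul0r.
case: (eqVneq (incidence K o s t) 0) => [->|/incidence_face/andP[st /eqP ct]].
  by rewrite !(mul0r, mulr0, if_same).
have sX : s \in X by apply: Xdown tX st _; rewrite -card_gt0 cs.
by rewrite sX (subsetP XY _ sX) ct cs eqxx mulr1.
Qed.

Lemma coboundary_sqrE o X (a b : idx S) :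
  (D o X *m D o X) (enum_rank a) (enum_rank b) =
  \sum_(t : {set V}) \sum_(l : 'I_(stalk_dim S t))
     coboundary_entry o X a (Tagged _ l) * coboundary_entry o X (Tagged _ l) b.
Proof.
rewrite mxE (reindex (@enum_rank (idx S))) /=; last by apply: onW_bij; apply: enum_rank_bij.
by rewrite sig_big_dep; apply: eq_bigr => -[t l] _; rewrite !coboundaryE !enum_rankK.
Qed.

Lemma coboundary_sqr o Y : is_complex Y -> is_orientation Y o -> is_cellular_sheaf Y S ->
  D o Y *m D o Y = 0.
Proof.
move=> Ycx Yo [_ Ycomp]; apply/matrixP => i k.
rewrite -(enum_valK i) -(enum_valK k) coboundary_sqrE mxE.
case: (enum_val i) (enum_val k) => [s ks] [u ku]; rewrite /coboundary_entry /=.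
have [sY|_] := boolP (s \in Y); last first.
  by rewrite big1 // => t _; rewrite big1 // => l _; rewrite mul0r.
have [uY|_] := boolP (u \in Y); last first.
  by rewrite big1 // => t _; rewrite big1 // => l _; rewrite andbF mulr0.
rewrite (bigID (mem Y)) /= [X in _ + X]big1 ?addr0 => [|t /negbTE tY]; last first.
  by rewrite big1 // => l _; rewrite tY mul0r.
transitivity (\sum_(t in Y) incidence K o s t * incidence K o t u * restr S s u ks ku).
  apply: eq_bigr => t tY; rewrite tY.
  under eq_bigr => l _ do rewrite mulrACA.
  rewrite -mulr_sumr.
  case: (eqVneq (incidence K o s t * incidence K o t u) 0) => [->|]; first by rewrite !mul0r.
  rewrite mulf_eq0 negb_or => /andP[/incidence_face/andP[st _] /incidence_face/andP[tu _]].
  by rewrite (Ycomp s t u) // mxE.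
by rewrite -mulr_suml sum_incidence_mul // mul0r.
Qed.

Lemma dq_proj o X q : is_complex X -> dq S o X q *m cp X q.+1 = dq S o X q.
Proof. by move=> Xc; rewrite -dq_restrict. Qed.

Lemma proj_dq o X q : cp X q *m dq S o X q = dq S o X q.
Proof. by rewrite /dq mulmxA cochain_proj_idem. Qed.

Lemma dq_mul_dq o Y q : is_complex Y -> is_orientation Y o -> is_cellular_sheaf Y S ->
  dq S o Y q *m dq S o Y q.+1 = 0.
Proof.
move=> Yc Yo YS; rewrite [dq S o Y q.+1]/dq mulmxA dq_proj //.
by rewrite /dq -mulmxA coboundary_sqr // mulmx0.
Qed.

Lemma coboundaries_sub_cocycles o Y q :
  is_complex Y -> is_orientation Y o -> is_cellular_sheaf Y S ->
  (coboundaries S o Y q <= cocycles S o Y q)%MS.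
Proof.
case: q => [|q] Yc Yo YS; first exact: sub0mx.
by rewrite /coboundaries /= sub_capmx -{1}(dq_proj o q Yc) submxMl sub_kermx dq_mul_dq ?eqxx.
Qed.

Lemma dprev_restrict o (X Y : {set {set V}}) q : is_complex X -> X \subset Y ->
  dprev S o X q = dprev S o Y q *m cp X q.
Proof. by case: q => [|q] Xc XY /=; rewrite ?mul0mx // (dq_restrict o q Xc XY). Qed.

End Cochains.

Section Adjoint.
Variables (K : numFieldType) (cj : {rmorphism K -> K}).
Hypothesis cjK : involutive cj.
Hypothesis mul_conj_ge0 : forall x : K, 0 <= x * cj x.

Local Notation "A ^H" := (adjmx cj A) (at level 8, format "A ^H").

Lemma adjmxM m n p (A : 'M[K]_(m, n)) (B : 'M[K]_(n, p)) : (A *m B)^H = B^H *m A^H.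
Proof. by rewrite /adjmx map_mxM trmx_mul. Qed.

Lemma adjmxK m n (A : 'M[K]_(m, n)) : A^H^H = A.
Proof. by apply/matrixP => i j; rewrite /adjmx !mxE; apply: cjK. Qed.

Lemma adjmx0 m n : (0 : 'M[K]_(m, n))^H = 0.
Proof. by rewrite /adjmx map_mx0 trmx0. Qed.

Lemma adjmx_eq0 m n (A : 'M[K]_(m, n)) : (A^H == 0) = (A == 0).
Proof. by apply/eqP/eqP => [A0|->]; [rewrite -[A]adjmxK A0|]; rewrite adjmx0. Qed.

Lemma mxrank_adj m n (A : 'M[K]_(m, n)) : \rank A^H = \rank A.
Proof. by rewrite /adjmx mxrank_tr mxrank_map. Qed.

Lemma mulmx_adj_diag_eq0 m n (A : 'M[K]_(m, n)) i : ((A *m A^H) i i == 0) = (row i A == 0).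
Proof.
have -> : (A *m A^H) i i = \sum_j A i j * cj (A i j) by rewrite mxE; apply: eq_bigr => j _; rewrite !mxE.
rewrite psumr_eq0 //; apply/allP/eqP => [A0|/rowP A0 j _].
  apply/rowP => j; have /implyP/(_ isT) := A0 j (mem_index_enum j).
  by rewrite !mxE mulf_eq0 fmorph_eq0 orbb => /eqP.
by have := A0 j; rewrite !mxE => ->; rewrite mul0r eqxx.
Qed.

Lemma mulmx_adj_eq0 m n (A : 'M[K]_(m, n)) : (A *m A^H == 0) = (A == 0).
Proof.
apply/eqP/eqP => [AA0|->]; last by rewrite mul0mx.
by apply/row_matrixP => i; apply/eqP; rewrite row0 -mulmx_adj_diag_eq0 AA0 mxE.
Qed.

Lemma mulmx_adj_diag_ge0 m n (A : 'M[K]_(m, n)) i : 0 <= (A *m A^H) i i.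
Proof. by rewrite mxE sumr_ge0 // => j _; rewrite !mxE. Qed.

Lemma rv_mulmx_adj_eq0 n (x : 'rV[K]_n) : ((x *m x^H) 0 0 == 0) = (x == 0).
Proof. by rewrite mulmx_adj_diag_eq0 row_id. Qed.

Lemma mxrank_mul_adj m n (A : 'M[K]_(m, n)) : \rank (A *m A^H) = \rank A.
Proof.
apply/eqP; rewrite eqn_leq mxrankM_maxl /=.
have kerA : (kermx (A *m A^H) <= kermx A)%MS.
  have /sub_kermxP kerAA := submx_refl (kermx (A *m A^H)).
  by apply/sub_kermxP/eqP; rewrite -mulmx_adj_eq0 adjmxM mulmxA -(mulmxA _ A) kerAA !mul0mx.
have := rank_leq_row A; have := rank_leq_row (A *m A^H).
by move: (mxrankS kerA); rewrite !mxrank_ker; lia.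
Qed.

Lemma mxrank_ortho m1 m2 n (W : 'M[K]_(m1, n)) (B : 'M[K]_(m2, n)) :
  (B <= W)%MS -> \rank (W :&: kermx B^H)%MS = (\rank W - \rank B)%N.
Proof.
move=> BW; have := mxrank_mul_ker W B^H.
have -> : \rank (W *m B^H) = \rank B.
  apply/eqP; rewrite eqn_leq -{1}(mxrank_adj B) mxrankM_maxr.
  by rewrite -{1}(mxrank_mul_adj B) mxrankS // submxMr.
by move=> <-; lia.
Qed.

Lemma ortho_complement_sub m1 m2 m3 n (W : 'M[K]_(m1, n)) (A : 'M[K]_(m2, n))
    (X : 'M[K]_(m3, n)) :
  (A <= W)%MS -> (X <= W :&: kermx A^H)%MS -> (W :&: kermx X^H <= A)%MS ->
  (W :&: kermx A^H <= X)%MS.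
Proof.
move=> AW XWA WXA; have XW : (X <= W)%MS := submx_trans XWA (capmxSl _ _).
have [_ <-] := mxrank_leqif_sup XWA; apply/eqP.
by move: (mxrankS XWA) (mxrankS WXA) (mxrankS AW); rewrite !mxrank_ortho //; lia.
Qed.

Lemma ortho_ortho_sub m1 m2 n (W : 'M[K]_(m1, n)) (A : 'M[K]_(m2, n)) :
  (A <= W)%MS -> (W :&: kermx (W :&: kermx A^H)^H <= A)%MS.
Proof.
move=> AW; apply: ortho_complement_sub => //; first exact: capmxSl.
rewrite sub_capmx AW sub_kermx -adjmx_eq0 adjmxM adjmxK.
by apply/eqP/sub_kermxP; exact: capmxSr.
Qed.

Lemma sub_idem m n (P : 'M[K]_n) (u : 'M[K]_(m, n)) :
  P *m P = P -> (u <= P)%MS = (u *m P == u).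
Proof.
move=> PP; apply/idP/idP => [/submxP[x ->]|/eqP <-]; last exact: submxMl.
by rewrite -mulmxA PP.
Qed.

Lemma idem_mulmx_adj m n (P : 'M[K]_n) (A : 'M[K]_(m, n)) :
  P *m P = P -> P^H = P -> (A <= P)%MS -> P *m A^H = A^H.
Proof. by move=> PP PH; rewrite (sub_idem _ PP) => /eqP {2}<-; rewrite adjmxM PH. Qed.

(* P, R, R1 are the orthogonal projections onto C^q(X_t), C^q(X_{t+p}) and
   C^{q+1}(X_{t+p}); D = d^{t+p}_q and B = d^t_{q-1}.  The row space C is
   C^{t,p}_{q+1}, the condition e D^* in C^q(X_t) being e D^* (1 - P) = 0. *)
Section PersistentKernel.
Variable n : nat.
Variables (P R R1 D B Eth Eths : 'M[K]_n).
Hypotheses (PP : P *m P = P) (PH : P^H = P) (RH : R^H = R) (R1H : R1^H = R1).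
Hypotheses (PR : P *m R = P) (RD : R *m D = D) (DR1 : D *m R1 = D).
Let Z := (R :&: kermx D)%MS.
Hypothesis BZ : (B <= Z *m P)%MS.
Let in_C m (M : 'M[K]_(m, n)) := (M <= R1)%MS && (M *m D^H <= P)%MS.
Hypothesis eth_in_C : forall u : 'rV[K]_n, (u <= P)%MS -> in_C (u *m Eth).
Hypothesis eth_adj : forall e u : 'rV[K]_n, in_C e -> (u <= P)%MS ->
  (e *m D^H *m u^H) 0 0 = (e *m (u *m Eth)^H) 0 0.
Hypothesis eths_adj : forall e u : 'rV[K]_n, in_C e -> (u <= P)%MS ->
  (e *m Eths *m u^H) 0 0 = (e *m (u *m Eth)^H) 0 0.

Let C := (R1 :&: kermx (D^H *m (1%:M - P)))%MS.
Let A := C *m D^H.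
Let Lap := Eth *m Eths + B^H *m B.

Lemma in_CE m (M : 'M[K]_(m, n)) : in_C M = (M <= C)%MS.
Proof.
rewrite /in_C /C sub_capmx sub_kermx (sub_idem _ PP) mulmxA mulmxBr mulmx1.
by rewrite subr_eq0 eq_sym.
Qed.

Lemma ker_laplacian_split (u : 'rV[K]_n) : (u <= P)%MS -> u *m Lap = 0 ->
  u *m Eth = 0 /\ u *m B^H = 0.
Proof.
move=> uP uL; have : (u *m Lap *m u^H) 0 0 == 0 by rewrite uL mul0mx mxE.
have -> : (u *m Lap *m u^H) 0 0 =
    ((u *m Eth) *m (u *m Eth)^H) 0 0 + ((u *m B^H) *m (u *m B^H)^H) 0 0.
  rewrite /Lap mulmxDr mulmxDl mxE !mulmxA eths_adj ?eth_in_C //.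
  by rewrite (adjmxM u B^H) adjmxK !mulmxA.
by rewrite paddr_eq0 ?mulmx_adj_diag_ge0 // !rv_mulmx_adj_eq0 => /andP[/eqP-> /eqP->].
Qed.

Lemma ker_eth (u : 'rV[K]_n) : (u <= P)%MS -> (u *m Eth == 0) = (u *m A^H == 0).
Proof.
move=> uP; rewrite -(adjmx_eq0 (u *m A^H)) adjmxM adjmxK; apply/eqP/eqP => [uE|Au].
  apply/row_matrixP => i; apply/rowP => j; rewrite ord1 row0 [RHS]mxE /A !row_mul.
  by rewrite eth_adj ?in_CE ?row_sub // uE adjmx0 mulmx0 mxE.
have /submxP[w uEw] : (u *m Eth <= C)%MS by rewrite -in_CE eth_in_C.
apply/eqP; rewrite -rv_mulmx_adj_eq0 -eth_adj ?eth_in_C // {1}uEw.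
by rewrite -!mulmxA (mulmxA C) -/A Au mulmx0 mxE.
Qed.

Lemma im_dadj_sub : (A <= P)%MS.
Proof. by have /andP[] : in_C C by rewrite in_CE. Qed.

Lemma proj_cocycles_ortho : (Z *m P <= P :&: kermx A^H)%MS.
Proof.
rewrite sub_capmx submxMl sub_kermx -mulmxA idem_mulmx_adj ?im_dadj_sub //.
have /sub_kermxP ZD : (Z <= kermx D)%MS := capmxSr _ _.
by rewrite /A adjmxM adjmxK mulmxA ZD mul0mx eqxx.
Qed.

Lemma ortho_proj_cocycles : (P :&: kermx (Z *m P)^H <= A)%MS.
Proof.
set U := (P :&: _)%MS; have UP : (U <= P)%MS := capmxSl _ _.
have UZ : U *m Z^H = 0.
  have := capmxSr P (kermx (Z *m P)^H); rewrite -/U => /sub_kermxP.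
  by rewrite adjmxM PH mulmxA; move: UP; rewrite (sub_idem _ PP) => /eqP ->.
have UR : (U <= R)%MS by apply: submx_trans UP _; rewrite -PR submxMl.
have DHR : (D^H <= R)%MS by rewrite -RD adjmxM RH submxMl.
have /submxP[E UE] : (U <= D^H)%MS.
  have := ortho_ortho_sub DHR; rewrite adjmxK -/Z; apply: submx_trans.
  by rewrite sub_capmx UR sub_kermx UZ eqxx.
have DHR1 : D^H = R1 *m D^H by rewrite -{1}DR1 adjmxM R1H.
by rewrite UE DHR1 mulmxA submxMr // -in_CE /in_C submxMl -mulmxA -DHR1 -UE UP.
Qed.

Lemma ker_eth_proj_cocycles : (P :&: kermx A^H <= Z *m P)%MS.
Proof. exact: ortho_complement_sub im_dadj_sub proj_cocycles_ortho ortho_proj_cocycles. Qed.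

Lemma ker_laplacian_sub : (P :&: kermx Lap <= Z *m P :&: kermx B^H)%MS.
Proof.
apply/row_subP => i; set u := row i _.
have uP : (u <= P)%MS := submx_trans (row_sub i _) (capmxSl _ _).
have /sub_kermxP uL : (u <= kermx Lap)%MS := submx_trans (row_sub i _) (capmxSr _ _).
have [/eqP uE uB] := ker_laplacian_split uP uL; rewrite ker_eth // in uE.
rewrite sub_capmx sub_kermx uB eqxx andbT; apply: submx_trans ker_eth_proj_cocycles.
by rewrite sub_capmx uP sub_kermx.
Qed.

Lemma sub_ker_laplacian : (Z *m P :&: kermx B^H <= P :&: kermx Lap)%MS.
Proof.
apply/row_subP => i; set u := row i _.
have uPA : (u <= P :&: kermx A^H)%MS.
  exact: submx_trans (row_sub i _) (submx_trans (capmxSl _ _) proj_cocycles_ortho).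
have uP : (u <= P)%MS := submx_trans uPA (capmxSl _ _).
have /sub_kermxP uA : (u <= kermx A^H)%MS := submx_trans uPA (capmxSr _ _).
have /sub_kermxP uB : (u <= kermx B^H)%MS := submx_trans (row_sub i _) (capmxSr _ _).
have /eqP uE : u *m Eth == 0 by rewrite ker_eth // uA.
by rewrite sub_capmx uP sub_kermx /Lap mulmxDr !mulmxA uE uB !mul0mx addr0 eqxx.
Qed.

Theorem mxrank_ker_laplacian :
  \rank (P :&: kermx Lap)%MS = (\rank (Z *m P + B) - \rank B)%N.
Proof.
rewrite (addsmx_idPl BZ) -mxrank_ortho //.
by apply/eqP; rewrite eqn_leq !mxrankS ?ker_laplacian_sub ?sub_ker_laplacian.
Qed.

End PersistentKernel.

End Adjoint.

Theorem persistent_laplacian_nullity (K : numFieldType) (cj : {rmorphism K -> K})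
  (cjK : involutive cj) (mul_conj_ge0 : forall x : K, 0 <= x * cj x)
  (V : finType) (Xt Xtp : {set {set V}})
  (o : {set V} -> seq V) (S : sheaf V K) (q : nat) (Eth Eths : 'M[K]_(amb S)) :
  is_complex Xtp -> is_complex Xt -> Xt \subset Xtp ->
  is_orientation Xtp o -> is_cellular_sheaf Xtp S ->
  is_eth cj o Xt Xtp q Eth ->
  is_eth_adj cj o Xt Xtp q Eth Eths ->
  induces_cohomology_map S o Xt Xtp q /\
  nullity_on (cochain_proj S Xt q) (persistent_laplacian cj o Xt Eth Eths q)
  = dim_im_induced S o Xt Xtp q.
Proof.
move=> Yc Xc XY Yo YS [eth_in_C eth_adj] [_ eths_adj].
split; first split.
- rewrite sub_capmx submxMl sub_kermx -mulmxA proj_dq (dq_restrict S o q Xc XY) mulmxA.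
  have /sub_kermxP -> : (cocycles S o Xtp q <= kermx (dq S o Xtp q))%MS := capmxSr _ _.
  by rewrite mul0mx eqxx.
- by rewrite /coboundaries (dprev_restrict S o q Xc XY).
- apply: (mxrank_ker_laplacian cjK mul_conj_ge0 (R1 := cochain_proj S Xtp q.+1)) => //;
    rewrite ?cochain_proj_idem ?cochain_proj_adj ?proj_dq ?dq_proj ?cochain_proj_sub //.
  by rewrite (dprev_restrict S o q Xc XY) submxMr // coboundaries_sub_cocycles.
Qed.

Theorem mainTheorem2 :
  (* real scalars: stalks are real inner product spaces, conj = id *)
  (forall (K : realFieldType) (V : finType) (Xt Xtp : {set {set V}})
     (o : {set V} -> seq V) (S : sheaf V K) (q : nat) (Eth Eths : 'M[K]_(amb S)),
     is_complex Xtp -> is_complex Xt -> Xt \subset Xtp ->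
     is_orientation Xtp o -> is_cellular_sheaf Xtp S ->
     is_eth (fun x : K => x) o Xt Xtp q Eth ->
     is_eth_adj (fun x : K => x) o Xt Xtp q Eth Eths ->
     induces_cohomology_map S o Xt Xtp q /\
     nullity_on (cochain_proj S Xt q)
       (persistent_laplacian (fun x : K => x) o Xt Eth Eths q)
     = dim_im_induced S o Xt Xtp q) /\
  (* complex scalars: stalks are complex inner product spaces *)
  (forall (K : numClosedFieldType) (V : finType) (Xt Xtp : {set {set V}})
     (o : {set V} -> seq V) (S : sheaf V K) (q : nat) (Eth Eths : 'M[K]_(amb S)),
     is_complex Xtp -> is_complex Xt -> Xt \subset Xtp ->
     is_orientation Xtp o -> is_cellular_sheaf Xtp S ->
     is_eth Num.conj o Xt Xtp q Eth ->
     is_eth_adj Num.conj o Xt Xtp q Eth Eths ->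
     induces_cohomology_map S o Xt Xtp q /\
     nullity_on (cochain_proj S Xt q)
       (persistent_laplacian Num.conj o Xt Eth Eths q)
     = dim_im_induced S o Xt Xtp q).
Proof.
split=> K V Xt Xtp o S q Eth Eths.
- apply: (persistent_laplacian_nullity (cj := idfun)) => // x.
  by rewrite /= -expr2 sqr_ge0.
- exact: (persistent_laplacian_nullity (@conjCK K) (@mul_conjC_ge0 K)).
Qed.
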